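(* Let $r_{\rm A}>0$ and $\theta_{\rm A}\in\,]0,\pi/2[$, and in the plane ${\rm O}xy$ put ${\rm A}=(r_{\rm A}\cos\theta_{\rm A},r_{\rm A}\sin\theta_{\rm A})$ and ${\rm B}=(-r_{\rm A}\cos\theta_{\rm A},r_{\rm A}\sin\theta_{\rm A})$, which are distinct, symmetric with respect to the axis ${\rm O}y$ and have positive ordinate. The direct Keplerian arcs around ${\rm O}$ from ${\rm A}$ to ${\rm B}$ are exactly the arcs of the conics with polar equation $$r=r_{\rm A}\frac{1-\eta\sin\theta_{\rm A}}{1-\eta\sin\theta}$$ traversed with $\theta$ increasing from $\theta_{\rm A}$ to $\pi-\theta_{\rm A}$, one for each value of the ''signed eccentricity'' $\eta\in\,]-\infty,1[$. Their elapsed time is $$T_D^S(\eta)=\int_{\theta_{\rm A}}^{\pi-\theta_{\rm A}}\frac{r_{\rm A}^{3/2}(1-\eta\sin\theta_{\rm A})^{3/2}}{(1-\eta\sin\theta)^2}\,{\rm d}\theta,$$ and $T_D^S$ is an increasing function of $\eta$ on $]-\infty,1[$ with ${\rm d}T_D^S/{\rm d}\eta>0$ everywhere. Moreover $T_D^S(\eta)\to0$ as $\eta\to-\infty$ and $T_D^S(\eta)\to+\infty$ as $\eta\to1^-$.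
   Context: Units are normalized so that the Kepler problem with fixed center ${\rm O}$ (the origin) is $\ddot q=-q/|q|^3$, $q\in\mathbb R^2$ (or $\mathbb R^3$). A Keplerian arc around ${\rm O}$ from ${\rm A}$ to ${\rm B}$ is a solution of this equation restricted to a compact time interval $[t_{\rm A},t_{\rm B}]$, $t_{\rm A}<t_{\rm B}$, with $q(t_{\rm A})={\rm A}$, $q(t_{\rm B})={\rm B}$; its elapsed time is $t_{\rm B}-t_{\rm A}$. An arc is called indirect if its convex hull contains ${\rm O}$, and direct otherwise; for a nonrectilinear arc, direct means that the (positive) polar angle swept along the arc is less than $\pi$. Polar coordinates $(r,\theta)$ are taken with respect to ${\rm O}$ and the axis ${\rm O}x$. The energy is $H=|\dot q|^2/2-1/|q|$. *)

From Stdlib Require Import Reals Lra List ClassicalEpsilon.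
Open Scope R_scope.

Definition norm2 (x y : R) : R := sqrt (x ^ 2 + y ^ 2).

Definition kepler_arc (x y : R -> R) (tA tB : R) (A B : R * R) : Prop :=
  tA < tB /\ (x tA, y tA) = A /\ (x tB, y tB) = B /\
  exists vx vy : R -> R, forall t, tA <= t <= tB ->
    (x t, y t) <> (0, 0) /\
    derivable_pt_lim x t (vx t) /\ derivable_pt_lim y t (vy t) /\
    derivable_pt_lim vx t (- x t / (norm2 (x t) (y t)) ^ 3) /\
    derivable_pt_lim vy t (- y t / (norm2 (x t) (y t)) ^ 3).

Definition arc_image (x y : R -> R) (tA tB : R) (p : R * R) : Prop :=
  exists t, tA <= t <= tB /\ p = (x t, y t).

Definition in_conv_hull (S : R * R -> Prop) (p : R * R) : Prop :=
  exists l : list (R * (R * R)),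
    Forall (fun c => 0 <= fst c /\ S (snd c)) l /\
    fold_right Rplus 0 (map fst l) = 1 /\
    fold_right Rplus 0 (map (fun c => fst c * fst (snd c)) l) = fst p /\
    fold_right Rplus 0 (map (fun c => fst c * snd (snd c)) l) = snd p.

Definition direct_arc (x y : R -> R) (tA tB : R) : Prop :=
  ~ in_conv_hull (arc_image x y tA tB) (0, 0).

Definition conic_r (rA thA eta th : R) : R :=
  rA * (1 - eta * sin thA) / (1 - eta * sin th).

Definition continuous_on_interval (f : R -> R) (a b : R) : Prop :=
  forall t, a <= t <= b -> forall eps, 0 < eps -> exists d, 0 < d /\
    forall s, a <= s <= b -> Rabs (s - t) < d -> Rabs (f s - f t) < eps.

Definition follows_conic (x y : R -> R) (tA tB rA thA eta : R) : Prop :=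
  exists th : R -> R,
    continuous_on_interval th tA tB /\
    (forall s t, tA <= s -> s < t -> t <= tB -> th s < th t) /\
    th tA = thA /\ th tB = PI - thA /\
    forall t, tA <= t <= tB ->
      x t = conic_r rA thA eta (th t) * cos (th t) /\
      y t = conic_r rA thA eta (th t) * sin (th t).

Definition TDS_integrand (rA thA eta : R) (th : R) : R :=
  Rpower rA (3 / 2) * Rpower (1 - eta * sin thA) (3 / 2) /
  (1 - eta * sin th) ^ 2.

(** Riemann integral as a total function (value chosen by epsilon; its
    meaning is pinned down by integrability asserted in the theorem). *)
Definition Rint (f : R -> R) (a b : R) : R :=
  epsilon (inhabits 0)
    (fun v => exists pr : Riemann_integrable f a b, RiemannInt pr = v).

Definition TDS (rA thA eta : R) : R :=
  Rint (TDS_integrand rA thA eta) thA (PI - thA).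

From Stdlib Require Import Reals Lra List ClassicalEpsilon.
From Coquelicot Require Import Coquelicot.
Open Scope R_scope.

(* The angular momentum [c = x y' - y x'] and the Laplace-Runge-Lenz vector [L] are
   first integrals of Kepler's equation.  Integrating [c / r^2] gives a polar angle
   [th] along the arc, and [q . L = c^2 - r] becomes the polar equation
   [r (1 - eta sin th) = c^2]: the component of [L] along [Ox] vanishes because A and B
   are symmetric.  Directness excludes [c <= 0] and forces [th] to sweep exactly
   [[thA, PI - thA]]; at the apex [th = PI / 2] this gives [eta < 1].  Kepler's second
   law [dt = r^2 / c dth] turns the elapsed time into [T_D^S(eta)], and conversely
   inverting [th |-> t(th)] produces an arc for every [eta < 1].  Differentiating under
   the integral shows that [T_D^S] increases.  It tends to 0 as [eta -> -oo] because the
   integrand is at most [rA^(3/2) / sqrt (1 - eta sin thA)], and to [+oo] as [eta -> 1]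
   because it is of order [(1 - eta)^(-2)] on a window of width [sqrt (1 - eta)] around
   [PI / 2]. *)

Lemma Rpower_3_2 x : 0 < x -> Rpower x (3 / 2) = x * sqrt x.
Proof.
  intro hx. replace (3 / 2) with (1 + / 2) by field.
  rewrite Rpower_plus, Rpower_1, Rpower_sqrt; auto.
Qed.

Lemma Rpower_pos a b : 0 < Rpower a b.
Proof. apply exp_pos. Qed.

Lemma sin_in_0_1 th : 0 < th < PI / 2 -> 0 < sin th < 1.
Proof.
  intro h. split; [apply sin_gt_0; lra |].
  rewrite <- sin_PI2. apply sin_increasing_1; lra.
Qed.

Lemma conic_denom_pos eta s : eta < 1 -> 0 <= s <= 1 -> 0 < 1 - eta * s.
Proof. intros he hs. destruct (Rle_lt_dec 0 eta); nra. Qed.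

Lemma sin_ge_on_arc thA th :
  0 < thA < PI / 2 -> thA <= th <= PI - thA -> 0 < sin thA <= sin th.
Proof.
  intros hA hth. split; [apply sin_gt_0; lra |].
  destruct (Rle_lt_dec th (PI / 2)).
  - destruct (Req_dec thA th) as [-> | ]; [lra |]. left. apply sin_increasing_1; lra.
  - rewrite <- (sin_PI_x th). destruct (Req_dec thA (PI - th)) as [-> | ]; [lra |].
    left. apply sin_increasing_1; lra.
Qed.

Lemma conic_denom_on_arc thA u th : 0 < thA < PI / 2 -> u < 1 -> thA <= th <= PI - thA ->
  0 < 1 - u * sin th.
Proof.
  intros hth hu Hth. apply conic_denom_pos; auto.
  pose proof (sin_ge_on_arc thA th hth Hth). pose proof (SIN_bound th). lra.
Qed.

Lemma conic_denom_thA thA u : 0 < thA < PI / 2 -> u < 1 -> 0 < 1 - u * sin thA.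
Proof. intros. apply (conic_denom_on_arc thA); auto. lra. Qed.

Lemma is_derive_continuity_pt (f : R -> R) x l : is_derive f x l -> continuity_pt f x.
Proof.
  intro h. apply continuity_pt_filterlim.
  apply (ex_derive_continuous (K := R_AbsRing) (V := R_NormedModule)). now exists l.
Qed.

Lemma is_derive_eq (f : R -> R) (x l l' : R) : is_derive f x l -> l = l' -> is_derive f x l'.
Proof. now intros ? <-. Qed.

Lemma is_derive_Rplus (f g : R -> R) (t a b : R) : is_derive f t a -> is_derive g t b ->
  is_derive (fun t => f t + g t) t (a + b).
Proof. intros. now apply (is_derive_plus f g). Qed.

Lemma is_derive_Rminus (f g : R -> R) (t a b : R) : is_derive f t a -> is_derive g t b ->
  is_derive (fun t => f t - g t) t (a - b).
Proof. intros. now apply (is_derive_minus f g). Qed.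

Lemma is_derive_Rmult (f g : R -> R) (t a b : R) : is_derive f t a -> is_derive g t b ->
  is_derive (fun t => f t * g t) t (a * g t + f t * b).
Proof. intros. apply (is_derive_mult f g); auto. intros; apply Rmult_comm. Qed.

Lemma is_derive_Rdiv (f g : R -> R) (t a b : R) : is_derive f t a -> is_derive g t b -> g t <> 0 ->
  is_derive (fun t => f t / g t) t ((a * g t - f t * b) / g t ^ 2).
Proof. intros. now apply (is_derive_div f g). Qed.

Lemma is_derive_cos_comp (f : R -> R) (t a : R) : is_derive f t a ->
  is_derive (fun t => cos (f t)) t (- sin (f t) * a).
Proof.
  intro h. eapply is_derive_eq; [apply (is_derive_comp cos f t); [apply is_derive_cos | exact h] |].
  apply Rmult_comm.
Qed.

Lemma is_derive_sin_comp (f : R -> R) (t a : R) : is_derive f t a ->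
  is_derive (fun t => sin (f t)) t (cos (f t) * a).
Proof.
  intro h. eapply is_derive_eq; [apply (is_derive_comp sin f t); [apply is_derive_sin | exact h] |].
  apply Rmult_comm.
Qed.

Lemma is_derive_zero_const_on (f : R -> R) a b :
  (forall t, a <= t <= b -> is_derive f t 0) -> forall t, a <= t <= b -> f t = f a.
Proof.
  intros Hf t Ht. destruct (Req_dec t a) as [-> | ]; auto.
  symmetry. apply (eq_is_derive f a t); [intros s Hs; apply Hf |]; lra.
Qed.

(* Writing [|sin th|] makes the density positive and continuous on all of [R]
   (when [eta < 1]), so that the time function below is a bijection of [R];
   on [thA, PI - thA] it coincides with [TDS_integrand]. *)
Definition time_density (rA thA eta th : R) : R :=
  Rpower rA (3 / 2) * Rpower (1 - eta * sin thA) (3 / 2) /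
  (1 - eta * Rabs (sin th)) ^ 2.

Definition time_to_angle (rA thA eta th : R) : R :=
  RInt (time_density rA thA eta) thA th.

Section TimeToAngle.
Variables rA thA eta : R.
Hypothesis heta : eta < 1.

Local Notation f := (time_density rA thA eta).

Lemma time_density_denom_pos th : 0 < 1 - eta * Rabs (sin th).
Proof.
  apply conic_denom_pos; auto. split; [apply Rabs_pos |].
  apply Rabs_le, SIN_bound.
Qed.

Lemma time_density_pos th : 0 < f th.
Proof.
  unfold time_density. pose proof (time_density_denom_pos th).
  apply Rdiv_lt_0_compat; [apply Rmult_lt_0_compat; apply Rpower_pos | now apply pow_lt].
Qed.

Lemma time_density_continuous th : continuous f th.
Proof.
  unfold time_density.
  apply (continuous_mult (fun _ => _) (fun th => / (1 - eta * Rabs (sin th)) ^ 2)).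
  { apply continuous_const. }
  apply (continuous_Rinv_comp (fun th => (1 - eta * Rabs (sin th)) ^ 2)).
  - assert (hD : continuous (fun th => 1 - eta * Rabs (sin th)) th).
    { apply (continuous_minus (fun _ => 1) (fun th => eta * Rabs (sin th))).
      - apply continuous_const.
      - apply (continuous_mult (fun _ => eta) (fun th => Rabs (sin th))).
        + apply continuous_const.
        + apply continuous_Rabs_comp, continuous_sin. }
    simpl. apply (continuous_mult _ (fun th => _ * 1)); auto.
    apply (continuous_mult _ (fun _ => 1)); auto. apply continuous_const.
  - apply pow_nonzero. pose proof (time_density_denom_pos th). lra.
Qed.

Lemma ex_RInt_time_density a b : ex_RInt f a b.
Proof.
  apply (ex_RInt_continuous (V := R_CompleteNormedModule)).
  intros; apply time_density_continuous.
Qed.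

Lemma time_to_angle_thA : time_to_angle rA thA eta thA = 0.
Proof. unfold time_to_angle. now rewrite RInt_point. Qed.

Lemma is_derive_time_to_angle th : is_derive (time_to_angle rA thA eta) th (f th).
Proof.
  apply (is_derive_RInt (V := R_CompleteNormedModule) _ _ thA).
  - apply filter_forall. intro b. apply (RInt_correct (V := R_CompleteNormedModule)).
    apply ex_RInt_time_density.
  - apply time_density_continuous.
Qed.

Lemma time_to_angle_sub a b :
  time_to_angle rA thA eta b - time_to_angle rA thA eta a = RInt f a b.
Proof.
  unfold time_to_angle.
  rewrite <- (RInt_Chasles (V := R_CompleteNormedModule) f thA a b)
    by apply ex_RInt_time_density.
  simpl. unfold plus; simpl. ring.
Qed.

Lemma time_to_angle_lt a b : a < b -> time_to_angle rA thA eta a < time_to_angle rA thA eta b.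
Proof.
  intro hab. enough (0 < RInt f a b) by (rewrite <- time_to_angle_sub in *; lra).
  apply RInt_gt_0; auto; intros; [apply time_density_pos | apply time_density_continuous].
Qed.

Lemma time_to_angle_inj a b : time_to_angle rA thA eta a = time_to_angle rA thA eta b -> a = b.
Proof.
  intro E. destruct (Rtotal_order a b) as [h | [h | h]]; auto;
    apply time_to_angle_lt in h; lra.
Qed.

(* The density is bounded below by a positive constant, so the time function
   grows at least linearly in both directions. *)
Lemma time_to_angle_surj t : exists th, time_to_angle rA thA eta th = t.
Proof.
  set (m := Rpower rA (3 / 2) * Rpower (1 - eta * sin thA) (3 / 2) / (1 + Rabs eta) ^ 2).
  assert (hm : 0 < m).
  { unfold m. apply Rdiv_lt_0_compat; [apply Rmult_lt_0_compat; apply Rpower_pos |].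
    apply pow_lt. pose proof (Rabs_pos eta). lra. }
  assert (lin : forall a b, a <= b ->
    m * (b - a) <= time_to_angle rA thA eta b - time_to_angle rA thA eta a).
  { intros a b hab. rewrite time_to_angle_sub.
    assert (H : RInt (fun _ => m) a b <= RInt f a b).
    { apply RInt_le; auto; [apply ex_RInt_const | apply ex_RInt_time_density |].
      intros th _. unfold time_density, m, Rdiv. apply Rmult_le_compat_l.
      { apply Rmult_le_pos; left; apply Rpower_pos. }
      pose proof (time_density_denom_pos th).
      apply Rinv_le_contravar; [now apply pow_lt |]. apply pow_incr. split; [lra |].
      assert (Rabs (eta * Rabs (sin th)) <= Rabs eta).
      { rewrite Rabs_mult, Rabs_Rabsolu. rewrite <- (Rmult_1_r (Rabs eta)) at 2.
        apply Rmult_le_compat_l; [apply Rabs_pos | apply Rabs_le, SIN_bound]. }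
      pose proof (Rle_abs (- (eta * Rabs (sin th)))). rewrite Rabs_Ropp in *. lra. }
    rewrite RInt_const in H. rewrite Rmult_comm. exact H. }
  set (a := thA - (Rabs t / m + 1)). set (b := thA + (Rabs t / m + 1)).
  assert (hq : 0 <= Rabs t / m) by (apply Rdiv_le_0_compat; auto; apply Rabs_pos).
  pose proof (lin a thA ltac:(unfold a; lra)) as Ha.
  pose proof (lin thA b ltac:(unfold b; lra)) as Hb.
  rewrite time_to_angle_thA in Ha, Hb.
  replace (m * (thA - a)) with (Rabs t + m) in Ha by (unfold a; field; lra).
  replace (m * (b - thA)) with (Rabs t + m) in Hb by (unfold b; field; lra).
  pose proof (Rle_abs t). pose proof (Rle_abs (- t)). rewrite Rabs_Ropp in *.
  destruct (IVT_gen (time_to_angle rA thA eta) a b t) as [th [_ Hth]].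
  - intro x. apply (is_derive_continuity_pt _ _ _ (is_derive_time_to_angle x)).
  - rewrite Rmin_left, Rmax_right; lra.
  - now exists th.
Qed.


Definition angle_at_time (rA thA eta t : R) : R :=
  epsilon (inhabits 0) (fun th => time_to_angle rA thA eta th = t).

Local Notation g := (angle_at_time rA thA eta).
Local Notation T := (time_to_angle rA thA eta).

Lemma time_to_angle_at_time t : T (g t) = t.
Proof.
  apply (epsilon_spec (inhabits 0) (fun th => T th = t)), time_to_angle_surj.
Qed.

Lemma angle_at_time_to_angle th : g (T th) = th.
Proof. apply time_to_angle_inj, time_to_angle_at_time. Qed.

Lemma angle_at_time_lt t1 t2 : t1 < t2 -> g t1 < g t2.
Proof.
  intro h. destruct (Rlt_le_dec (g t1) (g t2)) as [| [lt | eq]]; auto.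
  - apply time_to_angle_lt in lt. rewrite !time_to_angle_at_time in lt. lra.
  - apply (f_equal T) in eq. rewrite !time_to_angle_at_time in eq. lra.
Qed.

Lemma angle_at_time_le t1 t2 : t1 <= t2 -> g t1 <= g t2.
Proof. intros [h | ->]; [left; now apply angle_at_time_lt | lra]. Qed.

Lemma angle_at_time_continuous t : continuity_pt g t.
Proof.
  apply (Ranalysis5.continuity_pt_recip_interv T g (g t - 1) (g t + 1)); try lra.
  - intros; now apply time_to_angle_lt.
  - intros; apply time_to_angle_at_time.
  - intros u h1 h2. rewrite <- (angle_at_time_to_angle (g t - 1)),
      <- (angle_at_time_to_angle (g t + 1)). split; now apply angle_at_time_le.
  - intros a _. apply (is_derive_continuity_pt _ _ _ (is_derive_time_to_angle a)).
  - rewrite <- (time_to_angle_at_time t) at 2 3. split; apply time_to_angle_lt; lra.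
Qed.

Lemma is_derive_angle_at_time t : is_derive g t (1 / f (g t)).
Proof.
  apply is_derive_Reals.
  assert (Hi : g (t - 1) <= g t <= g (t + 1)) by (split; apply angle_at_time_le; lra).
  pose (dT := fun a => exist _ (f a)
    (proj1 (is_derive_Reals _ _ _) (is_derive_time_to_angle a)) : derivable_pt T a).
  pose proof (Ranalysis5.derivable_pt_lim_recip_interv T g (t - 1) (t + 1) t
    (fun a _ => dT a) (angle_at_time_continuous t) ltac:(lra) ltac:(lra) Hi) as Hrecip.
  apply Hrecip.
  - intros; apply time_to_angle_at_time.
  - pose proof (time_density_pos (g t)). simpl. lra.
Qed.

End TimeToAngle.

Lemma TDS_integrand_eq_time_density rA thA eta th :
  0 <= sin th -> TDS_integrand rA thA eta th = time_density rA thA eta th.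
Proof. intro h. unfold TDS_integrand, time_density. now rewrite Rabs_right by lra. Qed.

Section TDS.
Variables rA thA eta : R.
Hypotheses (hthA : 0 < thA < PI / 2) (heta : eta < 1).

Lemma TDS_integrand_on_arc th :
  thA <= th <= PI - thA -> TDS_integrand rA thA eta th = time_density rA thA eta th.
Proof. intro h. apply TDS_integrand_eq_time_density, sin_ge_0; lra. Qed.

Lemma ex_RInt_TDS_integrand : ex_RInt (TDS_integrand rA thA eta) thA (PI - thA).
Proof.
  apply ex_RInt_ext with (time_density rA thA eta); [| now apply ex_RInt_time_density].
  intros th Hth. rewrite Rmin_left, Rmax_right in Hth by lra.
  symmetry; apply TDS_integrand_on_arc; lra.
Qed.

Lemma TDS_spec : exists pr : Riemann_integrable (TDS_integrand rA thA eta) thA (PI - thA),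
  RiemannInt pr = TDS rA thA eta.
Proof.
  pose proof (ex_RInt_Reals_0 _ _ _ ex_RInt_TDS_integrand) as pr.
  apply (epsilon_spec (inhabits 0) (fun v => exists pr, RiemannInt pr = v)).
  now exists (RiemannInt pr), pr.
Qed.

Lemma TDS_eq_RInt : TDS rA thA eta = RInt (TDS_integrand rA thA eta) thA (PI - thA).
Proof. destruct TDS_spec as [pr <-]. symmetry. apply RInt_Reals. Qed.

Lemma TDS_eq_time_to_angle : TDS rA thA eta = time_to_angle rA thA eta (PI - thA).
Proof.
  rewrite TDS_eq_RInt. apply RInt_ext. intros th Hth.
  rewrite Rmin_left, Rmax_right in Hth by lra. apply TDS_integrand_on_arc; lra.
Qed.

End TDS.

Definition kepler_ode_at (x y vx vy : R -> R) (t : R) : Prop :=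
  (x t, y t) <> (0, 0) /\
  derivable_pt_lim x t (vx t) /\ derivable_pt_lim y t (vy t) /\
  derivable_pt_lim vx t (- x t / (norm2 (x t) (y t)) ^ 3) /\
  derivable_pt_lim vy t (- y t / (norm2 (x t) (y t)) ^ 3).

Lemma norm2_polar r th : 0 <= r -> norm2 (r * cos th) (r * sin th) = r.
Proof.
  intro hr. unfold norm2. pose proof (sin2_cos2 th) as E. unfold Rsqr in E.
  replace ((r * cos th) ^ 2 + (r * sin th) ^ 2) with (r ^ 2) by nra.
  now apply sqrt_pow2.
Qed.

Lemma derivable_pt_lim_comp_is_derive (F : R -> R) (ph : R -> R) t dF dph l :
  is_derive F (ph t) dF -> is_derive ph t dph -> dph * dF = l ->
  derivable_pt_lim (fun t => F (ph t)) t l.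
Proof.
  intros hF hph <-. apply is_derive_Reals. now apply (is_derive_comp F ph).
Qed.

(* The conic [r = p / (1 - eta sin th)] run with [th' = (1 - eta sin th)^2 / p^(3/2)]
   (Kepler's second law with angular momentum [sqrt p]) solves Kepler's equation,
   with velocity [((eta - sin th), cos th) / sqrt p]. *)
Lemma kepler_ode_at_conic (p eta : R) (ph : R -> R) (t : R) :
  0 < p -> 0 < 1 - eta * sin (ph t) ->
  is_derive ph t ((1 - eta * sin (ph t)) ^ 2 / (p * sqrt p)) ->
  kepler_ode_at
    (fun t => p * cos (ph t) / (1 - eta * sin (ph t)))
    (fun t => p * sin (ph t) / (1 - eta * sin (ph t)))
    (fun t => (eta - sin (ph t)) / sqrt p) (fun t => cos (ph t) / sqrt p) t.
Proof.
  intros hp hD hph. set (th := ph t) in *.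
  assert (hc : 0 < sqrt p) by now apply sqrt_lt_R0.
  assert (hcc : sqrt p * sqrt p = p) by (apply sqrt_sqrt; lra).
  set (c := sqrt p) in *.
  assert (hr : 0 < p / (1 - eta * sin th)) by now apply Rdiv_lt_0_compat.
  assert (Hn : norm2 (p * cos th / (1 - eta * sin th)) (p * sin th / (1 - eta * sin th)) =
               p / (1 - eta * sin th)).
  { rewrite <- (norm2_polar (p / (1 - eta * sin th)) th) by lra. f_equal; field; lra. }
  pose proof (sin2_cos2 th) as Pyth. unfold Rsqr in Pyth.
  split; [| split; [| split; [| split]]]; cbv beta; fold th.
  - intro E. injection E as E1 E2. rewrite E1, E2 in Hn. unfold norm2 in Hn.
    replace (0 ^ 2 + 0 ^ 2) with 0 in Hn by ring. rewrite sqrt_0 in Hn. lra.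
  - eapply derivable_pt_lim_comp_is_derive with (F := fun a => p * cos a / (1 - eta * sin a));
      [auto_derive; fold th; try lra; reflexivity | exact hph |].
    rewrite <- hcc. field_simplify_eq; [| lra..].
    replace (cos th ^ 2) with (1 - sin th ^ 2) by nra. ring.
  - eapply derivable_pt_lim_comp_is_derive with (F := fun a => p * sin a / (1 - eta * sin a));
      [auto_derive; fold th; try lra; reflexivity | exact hph |].
    rewrite <- hcc. field. lra.
  - eapply derivable_pt_lim_comp_is_derive with (F := fun a => (eta - sin a) / c);
      [auto_derive; reflexivity | exact hph |].
    fold th. rewrite Hn, <- hcc. field. lra.
  - eapply derivable_pt_lim_comp_is_derive with (F := fun a => cos a / c);
      [auto_derive; reflexivity | exact hph |].
    fold th. rewrite Hn, <- hcc. field. lra.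
Qed.

Lemma conv_comb_y_pos (S : R * R -> Prop) (l : list (R * (R * R))) :
  (forall p, S p -> 0 < snd p) ->
  List.Forall (fun c => 0 <= fst c /\ S (snd c)) l ->
  0 <= fold_right Rplus 0 (map (fun c => fst c * snd (snd c)) l) /\
  (fold_right Rplus 0 (map (fun c => fst c * snd (snd c)) l) = 0 ->
   fold_right Rplus 0 (map fst l) = 0).
Proof.
  intros HS Hl. induction Hl as [| [lam [px py]] l [h1 h2] Hl [I1 I2]]; simpl in *; [lra |].
  apply HS in h2. simpl in h2.
  assert (0 <= lam * py) by (apply Rmult_le_pos; lra).
  split; [lra |]. intro E.
  assert (lam = 0) by (destruct (Rmult_integral lam py); lra).
  rewrite I2 by lra. lra.
Qed.

Lemma origin_not_in_conv_hull_upper (S : R * R -> Prop) :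
  (forall p, S p -> 0 < snd p) -> ~ in_conv_hull S (0, 0).
Proof.
  intros HS [l [Hl [H1 [_ H3]]]]. simpl in H3.
  destruct (conv_comb_y_pos S l HS Hl) as [_ I]. rewrite I in H1 by auto. lra.
Qed.

Lemma origin_in_conv_hull_opposite (S : R * R -> Prop) a b k1 k2 :
  S (k1 * a, k1 * b) -> S (- (k2 * a), - (k2 * b)) -> 0 < k1 -> 0 < k2 ->
  in_conv_hull S (0, 0).
Proof.
  intros H1 H2 h1 h2.
  exists ((k2 / (k1 + k2), (k1 * a, k1 * b)) :: (k1 / (k1 + k2), (- (k2 * a), - (k2 * b))) :: nil).
  assert (0 <= k2 / (k1 + k2)) by (apply Rlt_le, Rdiv_lt_0_compat; lra).
  assert (0 <= k1 / (k1 + k2)) by (apply Rlt_le, Rdiv_lt_0_compat; lra).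
  split; [| repeat split; simpl; field; lra].
  repeat apply List.Forall_cons; [split; auto.. | apply List.Forall_nil].
Qed.

Lemma continuous_on_interval_of_continuity_pt (f : R -> R) a b :
  (forall t, a <= t <= b -> continuity_pt f t) -> continuous_on_interval f a b.
Proof.
  intros H t Ht eps heps.
  destruct (proj1 (continuity_pt_locally f t) (H t Ht) (mkposreal eps heps)) as [d Hd].
  exists d. split; [apply cond_pos |]. intros s _ Hst. now apply (Hd s).
Qed.

Lemma time_density_semilatus rA thA eta th :
  0 < rA -> 0 < 1 - eta * sin thA -> 0 <= sin th ->
  time_density rA thA eta th =
  rA * (1 - eta * sin thA) * sqrt (rA * (1 - eta * sin thA)) / (1 - eta * sin th) ^ 2.
Proof.
  intros hr hu hs. unfold time_density. rewrite Rabs_right by lra.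
  rewrite Rpower_mult_distr, Rpower_3_2 by nra. reflexivity.
Qed.

Lemma conic_arc_exists rA thA eta : 0 < rA -> 0 < thA < PI / 2 -> eta < 1 ->
  exists (x y : R -> R) (tA tB : R),
    kepler_arc x y tA tB (rA * cos thA, rA * sin thA) (- (rA * cos thA), rA * sin thA) /\
    direct_arc x y tA tB /\ follows_conic x y tA tB rA thA eta.
Proof.
  intros hr hth he. pose proof (conic_denom_thA thA eta hth he) as hu.
  set (p := rA * (1 - eta * sin thA)). assert (hp : 0 < p) by (unfold p; nra).
  set (ph := angle_at_time rA thA eta).
  set (tB := time_to_angle rA thA eta (PI - thA)).
  assert (htB : 0 < tB).
  { rewrite <- (time_to_angle_thA rA thA eta). apply time_to_angle_lt; auto. lra. }
  assert (ph0 : ph 0 = thA).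
  { rewrite <- (time_to_angle_thA rA thA eta). now apply angle_at_time_to_angle. }
  assert (phB : ph tB = PI - thA) by now apply angle_at_time_to_angle.
  assert (phr : forall t, 0 <= t <= tB -> thA <= ph t <= PI - thA).
  { intros t Ht. rewrite <- phB, <- ph0 at 1. split; apply angle_at_time_le; tauto. }
  assert (sinpos : forall t, 0 <= t <= tB -> 0 < sin (ph t)).
  { intros t Ht. apply sin_gt_0; pose proof (phr t Ht); lra. }
  assert (Dpos : forall t, 0 <= t <= tB -> 0 < 1 - eta * sin (ph t))
    by (intros t Ht; apply (conic_denom_on_arc thA); auto).
  exists (fun t => p * cos (ph t) / (1 - eta * sin (ph t))),
         (fun t => p * sin (ph t) / (1 - eta * sin (ph t))), 0, tB.
  split; [| split].
  - split; [| split; [| split]]; auto; cbv beta.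
    + rewrite ph0. f_equal; unfold p; field; lra.
    + rewrite phB, Rtrigo_facts.cos_pi_minus, sin_PI_x. f_equal; unfold p; field; lra.
    + exists (fun t => (eta - sin (ph t)) / sqrt p), (fun t => cos (ph t) / sqrt p).
      intros t Ht. apply kepler_ode_at_conic; auto.
      eapply is_derive_eq; [now apply is_derive_angle_at_time |].
      pose proof (Dpos t Ht). pose proof (sinpos t Ht).
      rewrite time_density_semilatus by (fold ph; auto; lra). fold ph p.
      assert (0 < sqrt p) by now apply sqrt_lt_R0. field. lra.
  - apply origin_not_in_conv_hull_upper. intros q [t [Ht ->]]. simpl.
    apply Rdiv_lt_0_compat; [apply Rmult_lt_0_compat |]; auto.
  - exists ph. split; [| split; [| split; [| split]]]; auto.
    + apply continuous_on_interval_of_continuity_pt. intros; now apply angle_at_time_continuous.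
    + intros; now apply angle_at_time_lt.
    + intros t Ht. unfold conic_r. fold p. pose proof (Dpos t Ht). split; field; lra.
Qed.

Section KeplerArc.
Variables (x y vx vy : R -> R) (tA tB : R).
Hypothesis Htab : tA < tB.
Hypothesis HK : forall t, tA <= t <= tB -> kepler_ode_at x y vx vy t.

Definition radius t := norm2 (x t) (y t).

Lemma radius_sq_pos t : tA <= t <= tB -> 0 < x t ^ 2 + y t ^ 2.
Proof.
  intro Ht. destruct (HK t Ht) as [Hn _].
  destruct (Req_dec (x t) 0) as [h1 | h1]; [destruct (Req_dec (y t) 0) as [h2 | h2] |]; try nra.
  exfalso; apply Hn; now rewrite h1, h2.
Qed.

Lemma radius_pos t : tA <= t <= tB -> 0 < radius t.
Proof. intro. apply sqrt_lt_R0, radius_sq_pos; auto. Qed.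

Lemma radius_sq t : tA <= t <= tB -> radius t ^ 2 = x t ^ 2 + y t ^ 2.
Proof. intro Ht. apply pow2_sqrt. pose proof (radius_sq_pos t Ht); lra. Qed.

Lemma is_derive_x t : tA <= t <= tB -> is_derive x t (vx t).
Proof. intro. apply is_derive_Reals, HK; auto. Qed.
Lemma is_derive_y t : tA <= t <= tB -> is_derive y t (vy t).
Proof. intro. apply is_derive_Reals, HK; auto. Qed.
Lemma is_derive_vx t : tA <= t <= tB -> is_derive vx t (- x t / radius t ^ 3).
Proof. intro. apply is_derive_Reals, HK; auto. Qed.
Lemma is_derive_vy t : tA <= t <= tB -> is_derive vy t (- y t / radius t ^ 3).
Proof. intro. apply is_derive_Reals, HK; auto. Qed.

Lemma is_derive_radius t : tA <= t <= tB ->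
  is_derive radius t ((x t * vx t + y t * vy t) / radius t).
Proof.
  intro Ht. unfold radius at 1, norm2.
  eapply is_derive_eq; [apply (is_derive_sqrt (fun t => x t ^ 2 + y t ^ 2)) |].
  - apply is_derive_Rplus; apply (is_derive_pow _ 2); [apply is_derive_x | apply is_derive_y]; auto.
  - apply radius_sq_pos; auto.
  - fold (norm2 (x t) (y t)) (radius t). pose proof (radius_pos t Ht). simpl. field. lra.
Qed.

Definition ang_mom t := x t * vy t - y t * vx t.

Lemma ang_mom_const t : tA <= t <= tB -> ang_mom t = ang_mom tA.
Proof.
  apply is_derive_zero_const_on. intros s Hs. unfold ang_mom.
  eapply is_derive_eq; [apply is_derive_Rminus; apply is_derive_Rmult |].
  1-4: auto using is_derive_x, is_derive_y, is_derive_vx, is_derive_vy.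
  pose proof (radius_pos s Hs). field. lra.
Qed.

Let c := ang_mom tA.

Lemma is_derive_ux t : tA <= t <= tB ->
  is_derive (fun t => x t / radius t) t (- y t * c / radius t ^ 3).
Proof.
  intro Ht. pose proof (radius_pos t Ht).
  eapply is_derive_eq; [apply is_derive_Rdiv; [apply is_derive_x | apply is_derive_radius |] |];
    auto; [lra |].
  unfold c. rewrite <- (ang_mom_const t Ht). unfold ang_mom.
  transitivity ((vx t * radius t ^ 2 - x t * (x t * vx t + y t * vy t)) / radius t ^ 3);
    [field; lra |].
  rewrite radius_sq by auto. field. lra.
Qed.

Lemma is_derive_uy t : tA <= t <= tB ->
  is_derive (fun t => y t / radius t) t (x t * c / radius t ^ 3).
Proof.
  intro Ht. pose proof (radius_pos t Ht).
  eapply is_derive_eq; [apply is_derive_Rdiv; [apply is_derive_y | apply is_derive_radius |] |];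
    auto; [lra |].
  unfold c. rewrite <- (ang_mom_const t Ht). unfold ang_mom.
  transitivity ((vy t * radius t ^ 2 - y t * (x t * vx t + y t * vy t)) / radius t ^ 3);
    [field; lra |].
  rewrite radius_sq by auto. field. lra.
Qed.

Definition lrl_x t := c * vy t - x t / radius t.
Definition lrl_y t := - c * vx t - y t / radius t.

Lemma lrl_x_const t : tA <= t <= tB -> lrl_x t = lrl_x tA.
Proof.
  apply is_derive_zero_const_on. intros s Hs. unfold lrl_x.
  eapply is_derive_eq.
  { apply is_derive_Rminus; [apply (is_derive_scal vy), is_derive_vy | apply is_derive_ux]; auto. }
  pose proof (radius_pos s Hs). simpl. field. lra.
Qed.

Lemma lrl_y_const t : tA <= t <= tB -> lrl_y t = lrl_y tA.
Proof.
  apply is_derive_zero_const_on. intros s Hs. unfold lrl_y.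
  eapply is_derive_eq.
  { apply is_derive_Rminus; [apply (is_derive_scal vx), is_derive_vx | apply is_derive_uy]; auto. }
  pose proof (radius_pos s Hs). simpl. field. lra.
Qed.

Lemma lrl_dot_position t : tA <= t <= tB ->
  x t * lrl_x tA + y t * lrl_y tA = c ^ 2 - radius t.
Proof.
  intro Ht. rewrite <- (lrl_x_const t Ht), <- (lrl_y_const t Ht).
  pose proof (radius_pos t Ht). pose proof (radius_sq t Ht) as Hr.
  unfold lrl_x, lrl_y.
  transitivity (c * ang_mom t - (x t ^ 2 + y t ^ 2) / radius t); [unfold ang_mom; field; lra |].
  rewrite ang_mom_const, <- Hr by auto. fold c. field. lra.
Qed.

Definition clamp t := / 2 * (tA + tB + Rabs (t - tA) - Rabs (t - tB)).

Lemma clamp_in t : tA <= clamp t <= tB.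
Proof. unfold clamp, Rabs. destruct (Rcase_abs (t - tA)), (Rcase_abs (t - tB)); lra. Qed.

Lemma clamp_id t : tA <= t <= tB -> clamp t = t.
Proof.
  intro. unfold clamp. rewrite (Rabs_right (t - tA)), (Rabs_left1 (t - tB)) by lra. field.
Qed.

Lemma clamp_continuous t : continuous clamp t.
Proof.
  assert (Habs : forall a, continuity_pt (fun t => Rabs (t - a)) t).
  { intro a. apply (continuity_pt_comp (fun t => t - a) Rabs); [reg | apply Rcontinuity_abs]. }
  apply continuity_pt_filterlim. unfold clamp.
  apply continuity_pt_mult; [reg |]. apply continuity_pt_minus; auto.
  apply continuity_pt_plus; auto. reg.
Qed.

(* The angular velocity [c / r^2], extended continuously to all of [R] by
   clamping the time to [tA, tB]. *)
Definition angular_rate t := c / (x (clamp t) ^ 2 + y (clamp t) ^ 2).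

Lemma angular_rate_continuous t : continuous angular_rate t.
Proof.
  unfold angular_rate. pose proof (clamp_in t) as Hk.
  assert (Hxy : forall f vf, (forall s, tA <= s <= tB -> is_derive f s (vf s)) ->
    continuous (fun t => f (clamp t) ^ 2) t).
  { intros f vf Hf. apply (continuous_comp clamp (fun s => f s ^ 2)); [apply clamp_continuous |].
    apply (ex_derive_continuous (K := R_AbsRing) (V := R_NormedModule)).
    eexists. apply (is_derive_pow f 2). now apply Hf. }
  apply (continuous_mult (fun _ => c)); [apply continuous_const |].
  apply (continuous_Rinv_comp (fun t => x (clamp t) ^ 2 + y (clamp t) ^ 2)).
  - apply (continuous_plus (fun t => x (clamp t) ^ 2)).
    + apply (Hxy x vx), is_derive_x.
    + apply (Hxy y vy), is_derive_y.
  - pose proof (radius_sq_pos (clamp t) Hk). lra.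
Qed.

Lemma angular_rate_on_arc t : tA <= t <= tB -> angular_rate t = c / radius t ^ 2.
Proof. intro. unfold angular_rate. now rewrite clamp_id, radius_sq. Qed.

Lemma ex_RInt_angular_rate a b : ex_RInt angular_rate a b.
Proof.
  apply (ex_RInt_continuous (V := R_CompleteNormedModule)).
  intros; apply angular_rate_continuous.
Qed.

Variable th0 : R.
Hypothesis Hinit : x tA = radius tA * cos th0 /\ y tA = radius tA * sin th0.

Definition polar_angle t := th0 + RInt angular_rate tA t.

Lemma is_derive_polar_angle t : is_derive polar_angle t (angular_rate t).
Proof.
  unfold polar_angle. eapply is_derive_eq.
  { apply is_derive_Rplus; [apply is_derive_const |].
    apply (is_derive_RInt (V := R_CompleteNormedModule) angular_rate _ tA).
    - apply filter_forall. intro b. apply (RInt_correct (V := R_CompleteNormedModule)).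
      apply ex_RInt_angular_rate.
    - apply angular_rate_continuous. }
  apply Rplus_0_l.
Qed.

Lemma polar_angle_sub a b : polar_angle b - polar_angle a = RInt angular_rate a b.
Proof.
  unfold polar_angle.
  rewrite <- (RInt_Chasles (V := R_CompleteNormedModule) angular_rate tA a b)
    by apply ex_RInt_angular_rate.
  simpl. unfold plus; simpl. ring.
Qed.

Lemma polar_angle_tA : polar_angle tA = th0.
Proof. unfold polar_angle. rewrite RInt_point. simpl. unfold zero; simpl. ring. Qed.

(* The unit vector [(x, y) / r] rotates at the rate [c / r^2], like
   [(cos, sin)] of the polar angle; so their scalar product stays equal to 1. *)
Lemma polar_repr t : tA <= t <= tB ->
  x t = radius t * cos (polar_angle t) /\ y t = radius t * sin (polar_angle t).
Proof.
  intro Ht. pose proof (radius_pos t Ht). pose proof (radius_sq t Ht) as Hr.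
  set (g := fun t =>
    x t / radius t * cos (polar_angle t) + y t / radius t * sin (polar_angle t)).
  assert (g1 : g t = 1).
  { rewrite (is_derive_zero_const_on g tA tB); auto.
    - unfold g. rewrite polar_angle_tA. destruct Hinit as [-> ->].
      assert (0 < radius tA) by (apply radius_pos; lra).
      pose proof (sin2_cos2 th0) as P. unfold Rsqr in P. field_simplify; lra.
    - intros s Hs. unfold g. eapply is_derive_eq.
      { apply is_derive_Rplus; apply is_derive_Rmult;
          auto using is_derive_ux, is_derive_uy, is_derive_cos_comp, is_derive_sin_comp,
          is_derive_polar_angle. }
      rewrite angular_rate_on_arc by auto. pose proof (radius_pos s Hs). field. lra. }
  unfold g in g1. pose proof (sin2_cos2 (polar_angle t)) as P. unfold Rsqr in P.
  assert (U : (x t / radius t) ^ 2 + (y t / radius t) ^ 2 = 1).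
  { transitivity ((x t ^ 2 + y t ^ 2) / radius t ^ 2); [field; lra |]. rewrite <- Hr. field. lra. }
  assert (E : (x t / radius t - cos (polar_angle t)) ^ 2 +
              (y t / radius t - sin (polar_angle t)) ^ 2 = 0) by nra.
  destruct (Rplus_sqr_eq_0 (x t / radius t - cos (polar_angle t))
    (y t / radius t - sin (polar_angle t)) ltac:(unfold Rsqr; simpl in E; lra)) as [E1 E2].
  split; [replace (x t) with (radius t * (x t / radius t)) |
          replace (y t) with (radius t * (y t / radius t))];
    try (field; lra); f_equal; lra.
Qed.

End KeplerArc.

Record conic_motion (x y : R -> R) (tA tB rA thA eta c : R) (ph : R -> R) : Prop := {
  cm_eta_lt_1 : eta < 1;
  cm_ang_mom_pos : 0 < c;
  cm_semilatus : c ^ 2 = rA * (1 - eta * sin thA);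
  cm_angle_start : ph tA = thA;
  cm_angle_end : ph tB = PI - thA;
  cm_angle_incr : forall s t, tA <= s -> s < t -> t <= tB -> ph s < ph t;
  cm_angle_continuous : forall t, continuity_pt ph t;
  cm_angle_rate : forall t, tA <= t <= tB -> is_derive ph t (c / norm2 (x t) (y t) ^ 2);
  cm_polar : forall t, tA <= t <= tB ->
    x t = norm2 (x t) (y t) * cos (ph t) /\ y t = norm2 (x t) (y t) * sin (ph t);
  cm_conic : forall t, tA <= t <= tB -> norm2 (x t) (y t) * (1 - eta * sin (ph t)) = c ^ 2 }.
Arguments cm_eta_lt_1 {x y tA tB rA thA eta c ph}.
Arguments cm_ang_mom_pos {x y tA tB rA thA eta c ph}.
Arguments cm_semilatus {x y tA tB rA thA eta c ph}.
Arguments cm_angle_start {x y tA tB rA thA eta c ph}.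
Arguments cm_angle_end {x y tA tB rA thA eta c ph}.
Arguments cm_angle_incr {x y tA tB rA thA eta c ph}.
Arguments cm_angle_continuous {x y tA tB rA thA eta c ph}.
Arguments cm_angle_rate {x y tA tB rA thA eta c ph}.
Arguments cm_polar {x y tA tB rA thA eta c ph}.
Arguments cm_conic {x y tA tB rA thA eta c ph}.

Section DirectArc.
Variables (rA thA : R) (x y vx vy : R -> R) (tA tB : R).
Hypotheses (hr : 0 < rA) (hth : 0 < thA < PI / 2) (Htab : tA < tB).
Hypothesis HK : forall t, tA <= t <= tB -> kepler_ode_at x y vx vy t.
Hypotheses (xA : x tA = rA * cos thA) (yA : y tA = rA * sin thA)
  (xB : x tB = - (rA * cos thA)) (yB : y tB = rA * sin thA).
Hypothesis Hdir : direct_arc x y tA tB.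

Local Notation r := (radius x y).
Local Notation c := (ang_mom x y vx vy tA).
Local Notation ph := (polar_angle x y vx vy tA tB thA).
Let eta := - lrl_y x y vx vy tA tA.

Lemma radius_tA : r tA = rA.
Proof. unfold radius. rewrite xA, yA. apply norm2_polar; lra. Qed.

Lemma radius_tB : r tB = rA.
Proof.
  unfold radius. rewrite xB, yB. transitivity (norm2 (rA * cos thA) (rA * sin thA)).
  - unfold norm2. f_equal. ring.
  - apply norm2_polar; lra.
Qed.

Lemma polar_repr_arc t : tA <= t <= tB -> x t = r t * cos (ph t) /\ y t = r t * sin (ph t).
Proof. apply polar_repr; auto. now rewrite radius_tA. Qed.

Lemma lrl_x_zero : lrl_x x y vx vy tA tA = 0.
Proof.
  pose proof (lrl_dot_position x y vx vy tA tB HK tA ltac:(lra)) as LA.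
  pose proof (lrl_dot_position x y vx vy tA tB HK tB ltac:(lra)) as LB.
  rewrite xA, yA, radius_tA in LA. rewrite xB, yB, radius_tB in LB.
  assert (0 < cos thA) by (apply cos_gt_0; lra).
  assert (E : rA * cos thA * lrl_x x y vx vy tA tA = 0) by lra.
  destruct (Rmult_integral _ _ E); nra.
Qed.

Lemma conic_equation t : tA <= t <= tB -> r t * (1 - eta * sin (ph t)) = c ^ 2.
Proof.
  intro Ht. pose proof (lrl_dot_position x y vx vy tA tB HK t Ht) as L.
  rewrite lrl_x_zero, (proj2 (polar_repr_arc t Ht)) in L. unfold eta. lra.
Qed.

Lemma cos_sin_polar_angle_tB : cos (ph tB) = - cos thA /\ sin (ph tB) = sin thA.
Proof.
  destruct (polar_repr_arc tB ltac:(lra)) as [PxB PyB].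
  rewrite xB, radius_tB in PxB. rewrite yB, radius_tB in PyB.
  split; apply Rmult_eq_reg_l with rA; lra.
Qed.

(* An arc through A and through the point opposite to A contains O in its convex hull. *)
Lemma polar_angle_not_opposite t : tA <= t <= tB ->
  ~ (cos (ph t) = - cos thA /\ sin (ph t) = - sin thA).
Proof.
  intros Ht [hc hs]. apply Hdir. destruct (polar_repr_arc t Ht) as [P1 P2].
  apply (origin_in_conv_hull_opposite _ (cos thA) (sin thA) rA (r t)); auto.
  - exists tA. split; [lra | now rewrite xA, yA].
  - exists t. split; auto. rewrite P1, P2, hc, hs. f_equal; ring.
  - apply (radius_pos x y vx vy tA tB HK t Ht).
Qed.

Lemma polar_angle_ivt v : Rmin (ph tA) (ph tB) <= v <= Rmax (ph tA) (ph tB) ->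
  exists t, tA <= t <= tB /\ ph t = v.
Proof.
  intro Hv. destruct (IVT_gen ph tA tB v) as [t [Ht Hv']]; auto.
  - intro t. eapply is_derive_continuity_pt, is_derive_polar_angle; eauto.
  - rewrite Rmin_left, Rmax_right in Ht by lra. now exists t.
Qed.

Lemma polar_angle_monotone s t : tA <= s -> s < t -> t <= tB -> c <> 0 ->
  0 < c * (ph t - ph s).
Proof.
  intros hs hst ht hc. rewrite polar_angle_sub by auto.
  replace (c * RInt (angular_rate x y vx vy tA tB) s t)
    with (RInt (fun u => c * angular_rate x y vx vy tA tB u) s t)
    by (apply (RInt_scal (V := R_CompleteNormedModule)), ex_RInt_angular_rate; auto).
  apply RInt_gt_0; auto.
  - intros u Hu. rewrite angular_rate_on_arc by (auto; lra).
    pose proof (radius_pos x y vx vy tA tB HK u ltac:(lra)).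
    replace (c * (c / r u ^ 2)) with (c ^ 2 / r u ^ 2) by (field; lra).
    apply Rdiv_lt_0_compat; [apply pow2_gt_0 | apply pow_lt]; auto.
  - intros v _. apply (continuous_mult (fun _ => c)); [apply continuous_const |].
    apply angular_rate_continuous; auto.
Qed.

Lemma ang_mom_nonzero : c <> 0.
Proof.
  intro E. assert (Hph : ph tB = ph tA).
  { enough (ph tB - ph tA = 0) by lra. rewrite polar_angle_sub by auto.
    rewrite (RInt_ext _ (fun _ => 0)), RInt_const; [apply Rmult_0_r |].
    intros u _. unfold angular_rate. rewrite E. apply Rdiv_0_l. }
  rewrite polar_angle_tA in Hph. pose proof (proj1 cos_sin_polar_angle_tB) as hc.
  rewrite Hph in hc. assert (0 < cos thA) by (apply cos_gt_0; lra). lra.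
Qed.

(* A retrograde arc would have to leave A clockwise and reach B, whose polar angle
   is [PI - thA] modulo [2 PI], without passing the direction opposite to A. *)
Lemma ang_mom_pos : 0 < c.
Proof.
  pose proof ang_mom_nonzero as hc0. destruct (Rlt_or_le 0 c) as [| hle]; auto. exfalso.
  assert (hneg : c < 0) by lra.
  assert (ph0 := polar_angle_tA x y vx vy tA tB thA).
  destruct cos_sin_polar_angle_tB as [cB sB].
  assert (lt : ph tB < thA).
  { pose proof (polar_angle_monotone tA tB ltac:(lra) Htab ltac:(lra) hc0). nra. }
  assert (gt : thA - PI < ph tB).
  { destruct (Rlt_or_le (thA - PI) (ph tB)) as [| hle']; auto. exfalso.
    destruct (polar_angle_ivt (thA - PI)) as [t [Ht Hv]].
    { rewrite Rmin_right, Rmax_left; lra. }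
    apply (polar_angle_not_opposite t Ht).
    rewrite Hv, cos_minus, sin_minus, cos_PI, sin_PI. split; ring. }
  destruct (Rle_or_lt (ph tB) 0).
  - assert (Hs : 0 <= sin (- ph tB)) by (apply sin_ge_0; lra). rewrite sin_neg in Hs.
    pose proof (sin_in_0_1 thA hth). lra.
  - assert (0 < cos (ph tB)) by (apply cos_gt_0; lra).
    assert (0 < cos thA) by (apply cos_gt_0; lra). lra.
Qed.

Lemma polar_angle_incr s t : tA <= s -> s < t -> t <= tB -> ph s < ph t.
Proof.
  intros hs hst ht. pose proof ang_mom_pos.
  pose proof (polar_angle_monotone s t hs hst ht ltac:(lra)). nra.
Qed.

Lemma polar_angle_end : ph tB = PI - thA.
Proof.
  assert (ph0 := polar_angle_tA x y vx vy tA tB thA).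
  destruct cos_sin_polar_angle_tB as [cB sB].
  assert (gt : thA < ph tB) by (rewrite <- ph0 at 1; apply polar_angle_incr; lra).
  assert (lt : ph tB < thA + PI).
  { destruct (Rlt_or_le (ph tB) (thA + PI)) as [| hle]; auto. exfalso.
    destruct (polar_angle_ivt (thA + PI)) as [t [Ht Hv]].
    { rewrite Rmin_left, Rmax_right; lra. }
    apply (polar_angle_not_opposite t Ht). now rewrite Hv, neg_cos, neg_sin. }
  destruct (Rle_or_lt (ph tB) PI).
  - apply cos_inj; try lra. now rewrite cB, Rtrigo_facts.cos_pi_minus.
  - assert (sin (ph tB) < 0) by (apply sin_lt_0; lra).
    pose proof (sin_in_0_1 thA hth). lra.
Qed.

Lemma lrl_eta_lt_1 : eta < 1.
Proof.
  destruct (polar_angle_ivt (PI / 2)) as [t [Ht Hv]].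
  { rewrite polar_angle_tA, polar_angle_end, Rmin_left, Rmax_right; lra. }
  pose proof (conic_equation t Ht) as E. rewrite Hv, sin_PI2 in E.
  pose proof (radius_pos x y vx vy tA tB HK t Ht). pose proof ang_mom_pos.
  assert (0 < c ^ 2) by now apply pow_lt. nra.
Qed.

Lemma direct_arc_conic_motion : exists eta c ph, conic_motion x y tA tB rA thA eta c ph.
Proof.
  exists eta, c, ph. split.
  - apply lrl_eta_lt_1.
  - apply ang_mom_pos.
  - rewrite <- (conic_equation tA), radius_tA, polar_angle_tA by lra. reflexivity.
  - apply polar_angle_tA.
  - apply polar_angle_end.
  - apply polar_angle_incr.
  - intro t. eapply is_derive_continuity_pt, is_derive_polar_angle; eauto.
  - intros t Ht. eapply is_derive_eq;
      [eapply is_derive_polar_angle; eauto | now apply angular_rate_on_arc].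
  - apply polar_repr_arc.
  - apply conic_equation.
Qed.

End DirectArc.

Section ConicMotion.
Variables (x y : R -> R) (tA tB rA thA eta c : R) (ph : R -> R).
Hypotheses (hr : 0 < rA) (hth : 0 < thA < PI / 2) (Htab : tA < tB).
Hypothesis M : conic_motion x y tA tB rA thA eta c ph.

Lemma conic_motion_angle_range t : tA <= t <= tB -> thA <= ph t <= PI - thA.
Proof.
  intro Ht. rewrite <- (cm_angle_end M), <- (cm_angle_start M).
  split; [destruct (Req_dec t tA) | destruct (Req_dec t tB)]; subst; try lra;
    left; apply (cm_angle_incr M); lra.
Qed.

Lemma conic_motion_radius t : tA <= t <= tB ->
  0 < 1 - eta * sin (ph t) /\ norm2 (x t) (y t) = c ^ 2 / (1 - eta * sin (ph t)).
Proof.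
  intro Ht. pose proof (cm_conic M t Ht) as E. pose proof (cm_ang_mom_pos M).
  assert (0 < c ^ 2) by now apply pow_lt.
  assert (0 <= norm2 (x t) (y t)) by apply sqrt_pos.
  assert (0 < 1 - eta * sin (ph t)) by nra.
  split; auto. rewrite <- E. field. lra.
Qed.

Lemma conic_motion_follows_conic : follows_conic x y tA tB rA thA eta.
Proof.
  exists ph. split; [| split; [| split; [| split]]].
  - apply continuous_on_interval_of_continuity_pt. intros; apply (cm_angle_continuous M).
  - apply (cm_angle_incr M).
  - apply (cm_angle_start M).
  - apply (cm_angle_end M).
  - intros t Ht. destruct (conic_motion_radius t Ht) as [_ hr'].
    destruct (cm_polar M t Ht) as [Px Py]. unfold conic_r.
    rewrite <- (cm_semilatus M), <- hr'. auto.
Qed.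

Lemma conic_motion_time t : tA <= t <= tB -> time_to_angle rA thA eta (ph t) = t - tA.
Proof.
  pose proof (cm_eta_lt_1 M) as he. pose proof (conic_denom_thA thA eta hth he) as hu.
  intro Ht.
  enough (E : time_to_angle rA thA eta (ph t) - (t - tA) =
              time_to_angle rA thA eta (ph tA) - (tA - tA))
    by (rewrite (cm_angle_start M), time_to_angle_thA in E; lra).
  apply (is_derive_zero_const_on (fun t => time_to_angle rA thA eta (ph t) - (t - tA)) tA tB);
    auto.
  intros s Hs. eapply is_derive_eq.
  { eapply (is_derive_Rminus _ (fun t => t - tA) s _ 1).
    - apply (is_derive_comp (time_to_angle rA thA eta) ph); [now apply is_derive_time_to_angle |].
      now apply (cm_angle_rate M).
    - auto_derive; [auto | ring]. }
  pose proof (conic_motion_angle_range s Hs).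
  destruct (conic_motion_radius s Hs) as [hD ->].
  rewrite time_density_semilatus by (auto; apply sin_ge_0; lra).
  rewrite <- (cm_semilatus M), sqrt_pow2 by (pose proof (cm_ang_mom_pos M); lra).
  pose proof (cm_ang_mom_pos M). unfold scal; simpl; unfold mult; simpl. field. lra.
Qed.

Lemma conic_motion_duration : tB - tA = time_to_angle rA thA eta (PI - thA).
Proof. rewrite <- (cm_angle_end M). symmetry. apply conic_motion_time. lra. Qed.

(* At the apex the two polar equations must agree. *)
Lemma conic_motion_eta_unique eta' : eta' < 1 -> follows_conic x y tA tB rA thA eta' -> eta' = eta.
Proof.
  intros he' [th [_ [Inc' [h0' [hB' Hx']]]]].
  destruct (IVT_gen ph tA tB (PI / 2)) as [t0 [Ht0 Hm]]; [exact (cm_angle_continuous M) | |].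
  { rewrite (cm_angle_start M), (cm_angle_end M), Rmin_left, Rmax_right; lra. }
  rewrite Rmin_left, Rmax_right in Ht0 by lra.
  destruct (cm_polar M t0 Ht0) as [Px Py]. pose proof (cm_conic M t0 Ht0) as E.
  rewrite Hm, cos_PI2, Rmult_0_r in Px. rewrite Hm, sin_PI2, Rmult_1_r in Py, E.
  assert (Ha : thA <= th t0 <= PI - thA).
  { rewrite <- hB', <- h0'. split; [destruct (Req_dec t0 tA) | destruct (Req_dec t0 tB)];
      subst; try lra; left; apply Inc'; lra. }
  set (a := th t0) in *. set (r := norm2 (x t0) (y t0)) in *.
  pose proof (sin_in_0_1 thA hth) as hs. pose proof (sin_ge_on_arc thA a hth Ha) as hsa.
  pose proof (conic_denom_on_arc thA eta' a hth he' Ha) as D'.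
  pose proof (conic_denom_thA thA eta' hth he') as u'.
  destruct (Hx' t0 Ht0) as [X Y]. fold a in X, Y. unfold conic_r in X, Y.
  assert (cr : 0 < rA * (1 - eta' * sin thA) / (1 - eta' * sin a))
    by (apply Rdiv_lt_0_compat; nra).
  assert (ca : cos a = 0).
  { rewrite Px in X. symmetry in X. destruct (Rmult_integral _ _ X); lra. }
  assert (sa : sin a = 1).
  { pose proof (sin2_cos2 a) as P. unfold Rsqr in P. rewrite ca in P. nra. }
  rewrite sa in Y, D'. rewrite (cm_semilatus M) in E.
  assert (E1 : r * (1 - eta') = rA * (1 - eta' * sin thA)).
  { rewrite <- Py, Y. field. lra. }
  assert (hr0 : 0 < r).
  { pose proof (cm_eta_lt_1 M). pose proof (conic_denom_thA thA eta hth (cm_eta_lt_1 M)).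
    assert (0 < r * (1 - eta)) by nra. nra. }
  assert (F : (eta' - eta) * (r - rA * sin thA) = 0) by nra.
  destruct (Rmult_integral _ _ F); [lra |].
  assert (r = rA * sin thA) by lra. subst r. nra.
Qed.

End ConicMotion.

(* [d/du ((1 - u s)^(3/2) / (1 - u S)^2)
     = (1 - u s)^(1/2) (2 S - 3/2 s - 1/2 u s S) / (1 - u S)^3]. *)
Definition TDS_integrand_deta (rA thA u th : R) : R :=
  Rpower rA (3 / 2) * sqrt (1 - u * sin thA) *
  (2 * sin th - 3 / 2 * sin thA - 1 / 2 * u * sin thA * sin th) /
  ((1 - u * sin th) * ((1 - u * sin th) * (1 - u * sin th))).

Lemma is_derive_TDS_integrand_eta rA thA u th :
  0 < 1 - u * sin thA -> 1 - u * sin th <> 0 ->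
  is_derive (fun u => TDS_integrand rA thA u th) u (TDS_integrand_deta rA thA u th).
Proof.
  intros h1 h2. unfold TDS_integrand, Rpower at 2. auto_derive.
  { split; [lra |]. split; [| auto]. intro E. apply h2. nra. }
  replace (1 + - (u * sin thA)) with (1 - u * sin thA) by ring.
  change (exp (3 / 2 * ln (1 - u * sin thA))) with (Rpower (1 - u * sin thA) (3 / 2)).
  rewrite (Rpower_3_2 (1 - u * sin thA)) by auto. unfold TDS_integrand_deta. field. lra.
Qed.

Lemma TDS_integrand_deta_continuous rA thA u th :
  0 < 1 - u * sin thA -> 1 - u * sin th <> 0 ->
  continuity_2d_pt (TDS_integrand_deta rA thA) u th.
Proof.
  intros h1 h2. unfold TDS_integrand_deta.
  assert (Cs : continuity_2d_pt (fun _ v => sin v) u th).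
  { apply (continuity_1d_2d_pt_comp sin (fun _ v => v));
      [apply continuity_sin | apply continuity_2d_pt_id2]. }
  assert (CD : continuity_2d_pt (fun u v => 1 - u * sin v) u th).
  { apply continuity_2d_pt_minus; [apply continuity_2d_pt_const |].
    apply continuity_2d_pt_mult; [apply continuity_2d_pt_id1 | auto]. }
  apply continuity_2d_pt_mult; [apply continuity_2d_pt_mult; [apply continuity_2d_pt_mult |] |].
  - apply continuity_2d_pt_const.
  - apply (continuity_1d_2d_pt_comp sqrt (fun u _ => 1 - u * sin thA));
      [apply continuity_pt_sqrt; lra |].
    apply continuity_2d_pt_minus; [apply continuity_2d_pt_const |].
    apply continuity_2d_pt_mult; [apply continuity_2d_pt_id1 | apply continuity_2d_pt_const].
  - repeat apply continuity_2d_pt_minus; repeat apply continuity_2d_pt_mult; auto;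
      solve [apply continuity_2d_pt_const | apply continuity_2d_pt_id1].
  - apply continuity_2d_pt_inv; [repeat apply continuity_2d_pt_mult; auto |].
    repeat apply Rmult_integral_contrapositive_currified; auto.
Qed.

Lemma eventually_lt_1 eta : eta < 1 -> locally eta (fun u => u < 1).
Proof.
  intro h. assert (hp : 0 < (1 - eta) / 2) by lra.
  exists (mkposreal _ hp). intros u Hu. apply Rabs_lt_between' in Hu. simpl in Hu. lra.
Qed.

Section TDSDerivative.
Variables rA thA : R.
Hypothesis hth : 0 < thA < PI / 2.

Lemma is_derive_TDS eta : eta < 1 ->
  is_derive (TDS rA thA) eta (RInt (TDS_integrand_deta rA thA eta) thA (PI - thA)).
Proof.
  intro he. pose proof PI_RGT_0.
  apply is_derive_ext_loc with (fun u => RInt (fun th => TDS_integrand rA thA u th) thA (PI - thA)).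
  { apply filter_imp with (fun u => u < 1); [| now apply eventually_lt_1].
    intros u hu. symmetry. now apply TDS_eq_RInt. }
  replace (RInt (TDS_integrand_deta rA thA eta) thA (PI - thA)) with
    (RInt (fun th => Derive (fun u => TDS_integrand rA thA u th) eta) thA (PI - thA)).
  2: { apply RInt_ext. intros th Hth. rewrite Rmin_left, Rmax_right in Hth by lra.
       apply is_derive_unique, is_derive_TDS_integrand_eta; [now apply conic_denom_thA |].
       pose proof (conic_denom_on_arc thA eta th hth he ltac:(lra)). lra. }
  apply (is_derive_RInt_param (fun u th => TDS_integrand rA thA u th)).
  - apply filter_imp with (fun u => u < 1); [| now apply eventually_lt_1].
    intros u hu th Hth. rewrite Rmin_left, Rmax_right in Hth by lra.
    exists (TDS_integrand_deta rA thA u th).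
    apply is_derive_TDS_integrand_eta; [now apply conic_denom_thA |].
    pose proof (conic_denom_on_arc thA u th hth hu Hth). lra.
  - intros th Hth. rewrite Rmin_left, Rmax_right in Hth by lra.
    pose proof (conic_denom_on_arc thA eta th hth he Hth).
    assert (CD : continuity_2d_pt (fun u v => 1 - u * sin v) eta th).
    { apply continuity_2d_pt_minus; [apply continuity_2d_pt_const |].
      apply continuity_2d_pt_mult; [apply continuity_2d_pt_id1 |].
      apply (continuity_1d_2d_pt_comp sin (fun _ v => v));
        [apply continuity_sin | apply continuity_2d_pt_id2]. }
    apply continuity_2d_pt_ext_loc with (TDS_integrand_deta rA thA).
    + apply locally_2d_impl with (fun u v => u < 1 /\ 1 - u * sin v <> 0).
      * apply locally_2d_forall. intros u v [hu hv]. symmetry.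
        apply is_derive_unique, is_derive_TDS_integrand_eta; auto. now apply conic_denom_thA.
      * apply locally_2d_and; [| apply continuity_2d_pt_neq_0; auto; lra].
        assert (hp : 0 < (1 - eta) / 2) by lra. exists (mkposreal _ hp).
        intros u v Hu _. simpl in Hu. apply Rabs_lt_between' in Hu. lra.
    + apply TDS_integrand_deta_continuous; [now apply conic_denom_thA | lra].
  - apply filter_imp with (fun u => u < 1); [| now apply eventually_lt_1].
    intros u hu. now apply ex_RInt_TDS_integrand.
Qed.

Lemma TDS_integrand_deta_pos u th : u < 1 -> thA <= th <= PI - thA ->
  0 < TDS_integrand_deta rA thA u th.
Proof.
  intros hu Hth. unfold TDS_integrand_deta.
  pose proof (sin_in_0_1 thA hth). pose proof (sin_ge_on_arc thA th hth Hth).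
  pose proof (conic_denom_on_arc thA u th hth hu Hth). pose proof (conic_denom_thA thA u hth hu).
  assert (0 < 2 * sin th - 3 / 2 * sin thA - 1 / 2 * u * sin thA * sin th).
  { destruct (Rle_lt_dec u 0).
    - assert (0 <= - u * sin thA * sin th) by (apply Rmult_le_pos; [apply Rmult_le_pos |]; lra).
      nra.
    - assert (0 < (1 - u) * sin thA * sin th)
        by (apply Rmult_gt_0_compat; [apply Rmult_gt_0_compat |]; lra).
      nra. }
  apply Rdiv_lt_0_compat; [| repeat apply Rmult_lt_0_compat; auto].
  repeat apply Rmult_lt_0_compat; auto; [apply Rpower_pos | now apply sqrt_lt_R0].
Qed.

Lemma TDS_deriv_pos eta : eta < 1 -> 0 < RInt (TDS_integrand_deta rA thA eta) thA (PI - thA).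
Proof.
  intro he. pose proof PI_RGT_0. apply RInt_gt_0; [lra | |].
  - intros; apply TDS_integrand_deta_pos; auto; lra.
  - intros th Hth. apply continuity_pt_filterlim, continuity_pt_locally. intro eps.
    apply (locally_2d_1d_const_x (fun u v => Rabs (TDS_integrand_deta rA thA u v -
      TDS_integrand_deta rA thA eta th) < eps)).
    apply TDS_integrand_deta_continuous; [now apply conic_denom_thA |].
    pose proof (conic_denom_on_arc thA eta th hth he Hth). lra.
Qed.

Lemma TDS_increasing eta1 eta2 : eta1 < eta2 < 1 -> TDS rA thA eta1 < TDS rA thA eta2.
Proof.
  intro he.
  destruct (MVT_gen (TDS rA thA) eta1 eta2
    (fun u => RInt (TDS_integrand_deta rA thA u) thA (PI - thA))) as [e [He E]].
  - intros u Hu. rewrite Rmin_left, Rmax_right in Hu by lra. apply is_derive_TDS; lra.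
  - intros u Hu. rewrite Rmin_left, Rmax_right in Hu by lra.
    apply (is_derive_continuity_pt _ _ _ (is_derive_TDS u ltac:(lra))).
  - rewrite Rmin_left, Rmax_right in He by lra.
    pose proof (TDS_deriv_pos e ltac:(lra)). nra.
Qed.

End TDSDerivative.

Lemma RInt_const_le (f : R -> R) a b m : a <= b -> (forall t, continuous f t) ->
  (forall t, a <= t <= b -> m <= f t) -> m * (b - a) <= RInt f a b.
Proof.
  intros hab hf hm.
  assert (H : RInt (fun _ => m) a b <= RInt f a b).
  { apply RInt_le; [exact hab | apply ex_RInt_const | | intros; apply hm; lra].
    apply (ex_RInt_continuous (V := R_CompleteNormedModule)). intros; apply hf. }
  rewrite RInt_const, Rmult_comm in H. exact H.
Qed.

Lemma RInt_le_upper (f : R -> R) a b m : a <= b -> (forall t, continuous f t) ->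
  (forall t, a <= t <= b -> f t <= m) -> RInt f a b <= m * (b - a).
Proof.
  intros hab hf hm.
  assert (H : RInt f a b <= RInt (fun _ => m) a b).
  { apply RInt_le; [exact hab | | apply ex_RInt_const | intros; apply hm; lra].
    apply (ex_RInt_continuous (V := R_CompleteNormedModule)). intros; apply hf. }
  rewrite RInt_const, Rmult_comm in H. exact H.
Qed.

Lemma RInt_subinterval_le (f : R -> R) a b c d : a <= c -> c <= d -> d <= b ->
  (forall t, continuous f t) -> (forall t, a <= t <= b -> 0 <= f t) ->
  RInt f c d <= RInt f a b.
Proof.
  intros hac hcd hdb hf hpos.
  assert (ex : forall u v, ex_RInt f u v)
    by (intros; apply (ex_RInt_continuous (V := R_CompleteNormedModule)); auto).
  rewrite <- (RInt_Chasles (V := R_CompleteNormedModule) f a c b),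
    <- (RInt_Chasles (V := R_CompleteNormedModule) f c d b) by auto.
  simpl. unfold plus; simpl.
  assert (0 <= RInt f a c) by (apply RInt_ge_0; auto; intros; apply hpos; lra).
  assert (0 <= RInt f d b) by (apply RInt_ge_0; auto; intros; apply hpos; lra).
  lra.
Qed.

Lemma sin_ge_quadratic t : 0 <= t <= PI ->
  1 - (t - PI / 2) ^ 2 / 2 <= sin t.
Proof.
  intro Ht. rewrite <- cos_shift. replace (PI / 2 - t) with (- (t - PI / 2)) by ring.
  rewrite cos_neg. destruct (cos_bound (t - PI / 2) 0 ltac:(lra) ltac:(lra)) as [H _].
  unfold cos_approx, cos_term in H. simpl in *. lra.
Qed.

Section TDSLimits.
Variables rA thA : R.
Hypothesis hth : 0 < thA < PI / 2.

Let A := Rpower rA (3 / 2).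
Let s := sin thA.

Lemma time_density_on_arc eta th : eta < 1 -> thA <= th <= PI - thA ->
  time_density rA thA eta th =
  A * ((1 - eta * s) * sqrt (1 - eta * s)) / (1 - eta * sin th) ^ 2.
Proof.
  intros he Hth. unfold time_density. rewrite Rabs_right by (apply Rle_ge, sin_ge_0; lra).
  rewrite (Rpower_3_2 (1 - eta * sin thA)) by now apply conic_denom_thA. reflexivity.
Qed.

(* For [eta <= 0] the denominator is smallest at the endpoints, where it equals the
   numerator's [1 - eta s]. *)
Lemma TDS_le_of_nonpos eta : eta <= 0 ->
  TDS rA thA eta <= A / sqrt (1 - eta * s) * (PI - thA - thA).
Proof.
  intro he. pose proof PI_RGT_0. pose proof (sin_in_0_1 thA hth).
  assert (hu : 0 < 1 - eta * s) by (unfold s; nra).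
  assert (0 < sqrt (1 - eta * s)) by now apply sqrt_lt_R0.
  rewrite TDS_eq_time_to_angle by lra. unfold time_to_angle. apply RInt_le_upper; [lra | |].
  { intro; apply time_density_continuous; lra. }
  intros t Ht. rewrite time_density_on_arc by lra.
  assert (1 - eta * s <= 1 - eta * sin t)
    by (pose proof (sin_ge_on_arc thA t hth Ht); unfold s; nra).
  apply Rle_trans with (A * ((1 - eta * s) * sqrt (1 - eta * s)) / (1 - eta * s) ^ 2).
  - unfold Rdiv. apply Rmult_le_compat_l.
    + apply Rmult_le_pos; [left; apply Rpower_pos | apply Rmult_le_pos; lra].
    + apply Rinv_le_contravar; [now apply pow_lt | apply pow_incr; lra].
  - right. replace ((1 - eta * s) ^ 2)
      with ((1 - eta * s) * (sqrt (1 - eta * s) * sqrt (1 - eta * s)))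
      by (rewrite sqrt_sqrt by lra; ring).
    field. lra.
Qed.

Lemma TDS_pos eta : eta < 1 -> 0 < TDS rA thA eta.
Proof.
  intro he. pose proof PI_RGT_0. rewrite TDS_eq_time_to_angle by auto. unfold time_to_angle.
  apply RInt_gt_0; [lra | |]; intros;
    [apply time_density_pos | apply time_density_continuous]; auto.
Qed.

Lemma TDS_lim_minus_infty eps : 0 < eps ->
  exists M, forall eta, eta < M -> Rabs (TDS rA thA eta) < eps.
Proof.
  intro heps. pose proof PI_RGT_0. pose proof (sin_in_0_1 thA hth) as hs. fold s in hs.
  assert (hA : 0 < A) by apply Rpower_pos.
  set (L := A * (PI - thA - thA) / eps).
  assert (hL : 0 < L) by (unfold L; apply Rdiv_lt_0_compat; [apply Rmult_lt_0_compat |]; lra).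
  exists (Rmin 0 ((1 - L ^ 2) / s)). intros eta Heta.
  pose proof (Rmin_l 0 ((1 - L ^ 2) / s)). pose proof (Rmin_r 0 ((1 - L ^ 2) / s)).
  assert (uL : L ^ 2 < 1 - eta * s).
  { assert (E : eta * s < (1 - L ^ 2) / s * s) by (apply Rmult_lt_compat_r; lra).
    unfold Rdiv in E. rewrite Rmult_assoc, Rinv_l, Rmult_1_r in E by lra. lra. }
  assert (sqL : L < sqrt (1 - eta * s)).
  { rewrite <- (sqrt_pow2 L) by lra. apply sqrt_lt_1_alt. split; [apply pow2_ge_0 | auto]. }
  rewrite Rabs_right by (apply Rle_ge, Rlt_le, TDS_pos; lra).
  eapply Rle_lt_trans; [apply TDS_le_of_nonpos; lra |].
  apply Rlt_le_trans with (A / L * (PI - thA - thA)).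
  - apply Rmult_lt_compat_r; [lra |]. unfold Rdiv. apply Rmult_lt_compat_l; auto.
    apply Rinv_lt_contravar; nra.
  - right. unfold L. field. split; lra.
Qed.

Let C := A * ((1 - s) * sqrt (1 - s)).

Lemma TDS_near_1_const_pos : 0 < C.
Proof.
  pose proof (sin_in_0_1 thA hth). unfold C, s.
  apply Rmult_lt_0_compat; [apply Rpower_pos |].
  apply Rmult_lt_0_compat; [lra | apply sqrt_lt_R0; lra].
Qed.

Lemma time_density_ge_near_apex eta t : 0 < eta < 1 -> thA <= t <= PI - thA ->
  (t - PI / 2) ^ 2 <= 1 - eta -> 4 * C / (9 * (1 - eta) ^ 2) <= time_density rA thA eta t.
Proof.
  intros he Ht Hw. pose proof PI_RGT_0. pose proof (sin_in_0_1 thA hth) as hs. fold s in hs.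
  pose proof TDS_near_1_const_pos.
  rewrite time_density_on_arc by (auto; lra).
  pose proof (conic_denom_on_arc thA eta t hth ltac:(lra) Ht).
  pose proof (sin_ge_quadratic t ltac:(lra)).
  assert (1 - eta * sin t <= 3 / 2 * (1 - eta)) by (pose proof (SIN_bound t); nra).
  assert (C <= A * ((1 - eta * s) * sqrt (1 - eta * s))).
  { apply Rmult_le_compat_l; [left; apply Rpower_pos |].
    apply Rmult_le_compat; [lra | apply sqrt_pos | nra | apply sqrt_le_1_alt; nra]. }
  apply Rle_trans with (C / (1 - eta * sin t) ^ 2).
  - replace (4 * C / (9 * (1 - eta) ^ 2)) with (C / (3 / 2 * (1 - eta)) ^ 2) by (field; lra).
    unfold Rdiv. apply Rmult_le_compat_l; [lra |].
    apply Rinv_le_contravar; [now apply pow_lt | apply pow_incr; lra].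
  - unfold Rdiv. apply Rmult_le_compat_r; auto.
    left; apply Rinv_0_lt_compat, pow_lt; lra.
Qed.

Lemma TDS_ge_near_1 eta : 0 < eta < 1 -> 1 - eta < (PI / 2 - thA) ^ 2 ->
  8 * C / (9 * (1 - eta)) <= TDS rA thA eta.
Proof.
  intros he hw. pose proof PI_RGT_0. pose proof TDS_near_1_const_pos.
  set (w := 1 - eta) in *.
  set (dl := sqrt w). assert (hdl : 0 < dl) by (apply sqrt_lt_R0; unfold w; lra).
  assert (dl2 : dl ^ 2 = w) by (apply pow2_sqrt; unfold w; lra).
  assert (dlg : dl < PI / 2 - thA).
  { unfold dl. rewrite <- (sqrt_pow2 (PI / 2 - thA)) by lra.
    apply sqrt_lt_1_alt. unfold w in *. lra. }
  assert (dlw : w <= dl).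
  { assert (dl <= 1) by (unfold dl; rewrite <- sqrt_1; apply sqrt_le_1_alt; unfold w; lra). nra. }
  rewrite TDS_eq_time_to_angle by lra. unfold time_to_angle.
  eapply Rle_trans;
    [| apply (RInt_subinterval_le _ thA (PI - thA) (PI / 2 - dl) (PI / 2 + dl)); try lra].
  - eapply Rle_trans; [| apply (RInt_const_le _ _ _ (4 * C / (9 * w ^ 2))); [lra | |]].
    + replace (4 * C / (9 * w ^ 2) * (PI / 2 + dl - (PI / 2 - dl)))
        with (8 * C / (9 * w) * (dl / w)) by (field; unfold w; lra).
      rewrite <- (Rmult_1_r (8 * C / (9 * w))) at 1. apply Rmult_le_compat_l.
      * apply Rlt_le, Rdiv_lt_0_compat; unfold w in *; lra.
      * apply (Rmult_le_reg_r w); [unfold w; lra |]. unfold Rdiv.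
        rewrite Rmult_assoc, Rinv_l by (unfold w; lra). lra.
    + intro; apply time_density_continuous; lra.
    + intros t Ht. apply time_density_ge_near_apex; [lra | lra | fold w; rewrite <- dl2; nra].
  - intro; apply time_density_continuous; lra.
  - intros; left; apply time_density_pos; lra.
Qed.

Lemma TDS_lim_1 K : exists d, 0 < d /\ forall eta, 1 - d < eta < 1 -> K < TDS rA thA eta.
Proof.
  pose proof PI_RGT_0. pose proof TDS_near_1_const_pos. pose proof (Rabs_pos K).
  set (q := 8 * C / (9 * (Rabs K + 1))).
  assert (hq : 0 < q) by (unfold q; apply Rdiv_lt_0_compat; lra).
  set (g := (PI / 2 - thA) ^ 2). assert (hg : 0 < g) by (unfold g; apply pow_lt; lra).
  exists (Rmin 1 (Rmin g q)). split; [repeat apply Rmin_pos; lra |].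
  intros eta Heta.
  pose proof (Rmin_l 1 (Rmin g q)). pose proof (Rmin_r 1 (Rmin g q)).
  pose proof (Rmin_l g q). pose proof (Rmin_r g q).
  eapply Rlt_le_trans; [| apply TDS_ge_near_1; unfold g in *; lra].
  apply Rlt_le_trans with (Rabs K + 1); [pose proof (Rle_abs K); lra |].
  assert (hw : 1 - eta < q) by lra. unfold q in hw.
  apply (Rmult_le_reg_r (9 * (1 - eta))); [lra |]. unfold Rdiv at 1.
  rewrite Rmult_assoc, Rinv_l, Rmult_1_r by lra.
  apply (Rmult_lt_compat_r (9 * (Rabs K + 1))) in hw; [| lra].
  unfold Rdiv in hw. rewrite Rmult_assoc, Rinv_l, Rmult_1_r in hw by lra. lra.
Qed.

End TDSLimits.

Lemma direct_kepler_arc_conic_motion rA thA x y tA tB : 0 < rA -> 0 < thA < PI / 2 ->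
  kepler_arc x y tA tB (rA * cos thA, rA * sin thA) (- (rA * cos thA), rA * sin thA) ->
  direct_arc x y tA tB -> exists eta c ph, conic_motion x y tA tB rA thA eta c ph.
Proof.
  intros hr hth [Htab [HA [HB [vx [vy HK]]]]] Hdir.
  injection HA as xA yA. injection HB as xB yB.
  eapply direct_arc_conic_motion; eauto.
Qed.

Lemma conic_motion_of_follows_conic rA thA eta x y tA tB : 0 < rA -> 0 < thA < PI / 2 -> eta < 1 ->
  kepler_arc x y tA tB (rA * cos thA, rA * sin thA) (- (rA * cos thA), rA * sin thA) ->
  direct_arc x y tA tB -> follows_conic x y tA tB rA thA eta ->
  exists c ph, conic_motion x y tA tB rA thA eta c ph.
Proof.
  intros hr hth he K D F. destruct (direct_kepler_arc_conic_motion rA thA x y tA tB hr hth K D)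
    as (e & c & ph & M).
  rewrite (conic_motion_eta_unique x y tA tB rA thA e c ph hr hth (proj1 K) M eta he F).
  now exists c, ph.
Qed.

(* Both motions run through the same angles at the same times after their start,
   because [time_to_angle] is injective and the radius is a function of the angle. *)
Lemma conic_motions_translate x1 y1 x2 y2 tA1 tB1 tA2 tB2 rA thA eta c1 c2 ph1 ph2 :
  0 < rA -> 0 < thA < PI / 2 -> tA1 < tB1 -> tA2 < tB2 ->
  conic_motion x1 y1 tA1 tB1 rA thA eta c1 ph1 -> conic_motion x2 y2 tA2 tB2 rA thA eta c2 ph2 ->
  tB2 - tA2 = tB1 - tA1 /\
  forall s, 0 <= s <= tB1 - tA1 -> x2 (tA2 + s) = x1 (tA1 + s) /\ y2 (tA2 + s) = y1 (tA1 + s).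
Proof.
  intros hr hth H1 H2 M1 M2.
  assert (Ec : c1 ^ 2 = c2 ^ 2) by now rewrite (cm_semilatus M1), (cm_semilatus M2).
  pose proof (cm_ang_mom_pos M1). pose proof (cm_ang_mom_pos M2).
  assert (c1 = c2) as <- by (apply Rsqr_inj; unfold Rsqr in *; simpl in Ec; lra).
  assert (D : tB2 - tA2 = tB1 - tA1).
  { now rewrite (conic_motion_duration x1 y1 tA1 tB1 rA thA eta c1 ph1),
      (conic_motion_duration x2 y2 tA2 tB2 rA thA eta c1 ph2). }
  split; auto. intros s Hs.
  assert (I1 : tA1 <= tA1 + s <= tB1) by lra. assert (I2 : tA2 <= tA2 + s <= tB2) by lra.
  assert (Eph : ph2 (tA2 + s) = ph1 (tA1 + s)).
  { apply (time_to_angle_inj rA thA eta (cm_eta_lt_1 M1)).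
    rewrite (conic_motion_time x1 y1 tA1 tB1 rA thA eta c1 ph1),
      (conic_motion_time x2 y2 tA2 tB2 rA thA eta c1 ph2) by auto. ring. }
  destruct (conic_motion_radius _ _ _ _ _ _ _ _ _ M1 _ I1) as [_ R1].
  destruct (conic_motion_radius _ _ _ _ _ _ _ _ _ M2 _ I2) as [_ R2].
  destruct (cm_polar M1 _ I1) as [X1 Y1]. destruct (cm_polar M2 _ I2) as [X2 Y2].
  split; [rewrite X1, X2 | rewrite Y1, Y2]; rewrite R1, R2, Eph; reflexivity.
Qed.

Theorem proposition1 (rA thA : R) (hr : 0 < rA) (hth : 0 < thA < PI / 2) :
  let A := (rA * cos thA, rA * sin thA) in
  let B := (- (rA * cos thA), rA * sin thA) in
  (forall eta, eta < 1 ->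
     exists (x y : R -> R) (tA tB : R),
       kepler_arc x y tA tB A B /\ direct_arc x y tA tB /\
       follows_conic x y tA tB rA thA eta) /\
  (forall (x y : R -> R) (tA tB : R),
     kepler_arc x y tA tB A B -> direct_arc x y tA tB ->
     exists eta, eta < 1 /\ follows_conic x y tA tB rA thA eta /\
       (forall eta', eta' < 1 -> follows_conic x y tA tB rA thA eta' -> eta' = eta)) /\
  (forall eta (x1 y1 x2 y2 : R -> R) (tA1 tB1 tA2 tB2 : R), eta < 1 ->
     kepler_arc x1 y1 tA1 tB1 A B -> direct_arc x1 y1 tA1 tB1 ->
     follows_conic x1 y1 tA1 tB1 rA thA eta ->
     kepler_arc x2 y2 tA2 tB2 A B -> direct_arc x2 y2 tA2 tB2 ->
     follows_conic x2 y2 tA2 tB2 rA thA eta ->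
     tB2 - tA2 = tB1 - tA1 /\
     forall s, 0 <= s <= tB1 - tA1 ->
       x2 (tA2 + s) = x1 (tA1 + s) /\ y2 (tA2 + s) = y1 (tA1 + s)) /\
  (forall eta, eta < 1 ->
     exists pr : Riemann_integrable (TDS_integrand rA thA eta) thA (PI - thA),
       RiemannInt pr = TDS rA thA eta) /\
  (forall eta (x y : R -> R) (tA tB : R), eta < 1 ->
     kepler_arc x y tA tB A B -> direct_arc x y tA tB ->
     follows_conic x y tA tB rA thA eta ->
     tB - tA = TDS rA thA eta) /\
  (forall eta1 eta2, eta1 < eta2 < 1 -> TDS rA thA eta1 < TDS rA thA eta2) /\
  (forall eta, eta < 1 ->
     exists l, derivable_pt_lim (fun e => TDS rA thA e) eta l /\ 0 < l) /\
  (forall eps, 0 < eps -> exists M, forall eta, eta < M ->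
     Rabs (TDS rA thA eta) < eps) /\
  (forall K, exists d, 0 < d /\ forall eta, 1 - d < eta < 1 ->
     K < TDS rA thA eta).
Proof.
  intros A B.
  split; [| split; [| split; [| split; [| split; [| split; [| split; [| split]]]]]]].
  - intros eta he. now apply conic_arc_exists.
  - intros x y tA tB K D.
    destruct (direct_kepler_arc_conic_motion rA thA x y tA tB hr hth K D) as (eta & c & ph & M).
    exists eta. split; [apply (cm_eta_lt_1 M) |].
    split; [now apply (conic_motion_follows_conic x y tA tB rA thA eta c ph) |].
    intros eta' he' F.
    now apply (conic_motion_eta_unique x y tA tB rA thA eta c ph hr hth (proj1 K) M).
  - intros eta x1 y1 x2 y2 tA1 tB1 tA2 tB2 he K1 D1 F1 K2 D2 F2.
    destruct (conic_motion_of_follows_conic rA thA eta x1 y1 tA1 tB1) as (c1 & ph1 & M1); auto.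
    destruct (conic_motion_of_follows_conic rA thA eta x2 y2 tA2 tB2) as (c2 & ph2 & M2); auto.
    now apply (conic_motions_translate x1 y1 x2 y2 tA1 tB1 tA2 tB2 rA thA eta c1 c2 ph1 ph2);
      [| | apply K1 | apply K2 | |].
  - intros eta he. now apply TDS_spec.
  - intros eta x y tA tB he K D F.
    destruct (conic_motion_of_follows_conic rA thA eta x y tA tB) as (c & ph & M); auto.
    rewrite TDS_eq_time_to_angle by auto.
    now apply (conic_motion_duration x y tA tB rA thA eta c ph hr hth (proj1 K) M).
  - intros eta1 eta2 he. now apply TDS_increasing.
  - intros eta he. exists (RInt (TDS_integrand_deta rA thA eta) thA (PI - thA)).
    split; [apply is_derive_Reals; now apply is_derive_TDS | now apply TDS_deriv_pos].
  - now apply TDS_lim_minus_infty.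
  - now apply TDS_lim_1.
Qed.
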